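(* Let $G$ be a connected simple graph on $n\ge2$ vertices $v_1,\dots,v_n$, let $\alpha$ be a real number, and suppose the vertices are labeled so that $({}^\alpha m)_1\ge({}^\alpha m)_2\ge\cdots\ge({}^\alpha m)_n$. Let $N=\max_{i\sim j} d_j^\alpha/d_i^\alpha$. Then for $1\le i\le n$, \[\rho(A(G))\le \frac{({}^\alpha m)_i-N+\sqrt{(({}^\alpha m)_i+N)^2+4N\sum_{k=1}^{i-1}\big(({}^\alpha m)_k-({}^\alpha m)_i\big)}}{2}.\] Equality holds if and only if $({}^\alpha m)_1=\cdots=({}^\alpha m)_n$, or there is $t$ with $2\le t\le i$ such that: if $\alpha=0$, $G$ is a bidegreed graph with $d_1=\cdots=d_{t-1}=n-1>d_t=\cdots=d_n$; if $\alpha>0$, $G$ is a bidegreed graph with $({}^\alpha m)_1>({}^\alpha m)_2=\cdots=({}^\alpha m)_n$ and $d_1=n-1>d_2=\cdots=d_n$. (For $\alpha<0$ only the first alternative occurs.)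
   Context: $A(G)$ is the adjacency matrix of $G$; $i\sim j$ means $v_i,v_j$ are adjacent; $d_i$ is the degree of $v_i$. The generalized average degree of $v_i$ is $({}^\alpha m)_i=\frac{\sum_{j\sim i}d_j^\alpha}{d_i^\alpha}$. $\rho(\cdot)$ is the spectral radius (largest eigenvalue for symmetric nonnegative matrices). A bidegreed graph is one whose vertex degrees take exactly two distinct values. An empty sum equals $0$. *)

From Stdlib Require Import Reals List Arith Relations.
Import ListNotations.
Open Scope R_scope.

(* A simple graph on vertices 0..n-1 (vertex v_{k+1} of the paper is k here),
   given by a boolean adjacency relation. *)
Definition simple_graph (n : nat) (adj : nat -> nat -> bool) : Prop :=
  (forall i j, adj i j = adj j i) /\
  (forall i, adj i i = false) /\
  (forall i j, adj i j = true -> (i < n)%nat /\ (j < n)%nat).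

Definition connected (n : nat) (adj : nat -> nat -> bool) : Prop :=
  forall u v, (u < n)%nat -> (v < n)%nat ->
    clos_refl_trans nat (fun x y => adj x y = true) u v.

Definition sumR (l : list R) : R := fold_right Rplus 0 l.

Definition deg (n : nat) (adj : nat -> nat -> bool) (i : nat) : nat :=
  length (filter (fun j => adj i j) (seq 0 n)).

Definition dpow (n : nat) (adj : nat -> nat -> bool) (alpha : R) (i : nat) : R :=
  Rpower (INR (deg n adj i)) alpha.

Definition gavg (n : nat) (adj : nat -> nat -> bool) (alpha : R) (i : nat) : R :=
  sumR (map (fun j => if adj i j then dpow n adj alpha j else 0) (seq 0 n))
  / dpow n adj alpha i.

(* N = max over adjacent (ordered) pairs i ~ j of d_j^alpha / d_i^alpha.
   All ratios are positive, so folding Rmax from 0 gives the maximum whenever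
   there is at least one edge. *)
Definition Nmax (n : nat) (adj : nat -> nat -> bool) (alpha : R) : R :=
  fold_right Rmax 0
    (flat_map (fun i =>
       map (fun j => dpow n adj alpha j / dpow n adj alpha i)
           (filter (fun j => adj i j) (seq 0 n)))
     (seq 0 n)).

Definition Aentry (adj : nat -> nat -> bool) (i j : nat) : R :=
  if adj i j then 1 else 0.

Definition is_eigenvalue (n : nat) (adj : nat -> nat -> bool) (lam : R) : Prop :=
  exists x : nat -> R,
    (exists j, (j < n)%nat /\ x j <> 0) /\
    forall i, (i < n)%nat ->
      sumR (map (fun j => Aentry adj i j * x j) (seq 0 n)) = lam * x i.

(* rho(A(G)) : the largest eigenvalue (A(G) is real symmetric, so all its
   eigenvalues are real). *)
Definition is_spectral_radius (n : nat) (adj : nat -> nat -> bool) (r : R) : Prop :=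
  is_eigenvalue n adj r /\ forall lam, is_eigenvalue n adj lam -> lam <= r.

Definition bidegreed (n : nat) (adj : nat -> nat -> bool) : Prop :=
  exists a b : nat, a <> b /\
    (forall i, (i < n)%nat -> deg n adj i = a \/ deg n adj i = b) /\
    (exists i, (i < n)%nat /\ deg n adj i = a) /\
    (exists i, (i < n)%nat /\ deg n adj i = b).

(** Let p_k = d_k^alpha and let W = D^{-alpha} A D^{alpha}, i.e.
   W_kj = A_kj p_j / p_k.  W is similar to A, nonnegative, has zero diagonal,
   entries at most N, and row sums (^alpha m)_k.  The proof works at the level
   of such matrices:
   - a Collatz-Wielandt lemma: a positive vector x with W x <= th x bounds
     every eigenvalue by th, and for an irreducible W equality forces W x = th x;
   - for row sums ordered around index i, with S_i = sum_{k<i} (m_k - m_i) and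
     th the larger root of th (th + N) = m_i (th + N) + N S_i (the bound), the
     vector x_k = 1 + (m_k - m_i)/(th+N) (k < i), x_k = 1 (k >= i) satisfies
     W x <= th x;
     equality in every row then says that rows k >= i have m_k = m_i and that
     each j < i with m_j > m_i has maximal entries W_kj = N in every other row.
   For the graph, equality thus yields a prefix of dominating vertices; the
   cases alpha = 0 and alpha <> 0 give the two bidegreed families.  Conversely
   the constant case has eigenvector (p_k), and the bidegreed families have an
   explicit two-valued eigenvector realizing the bound. *)

From Stdlib Require Import Reals List Arith Relations Lra Lia Psatz Wf_nat Classical.
Import ListNotations.
Open Scope R_scope.

Notation SR n f := (sumR (map f (seq 0 n))).

Lemma sumR_app (l1 l2 : list R) : sumR (l1 ++ l2) = sumR l1 + sumR l2.
Proof. induction l1 as [|a l1 IH]; simpl; [lra|]. unfold sumR in *; simpl; rewrite IH; lra. Qed.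

Lemma SR_S (n : nat) (f : nat -> R) : SR (S n) f = SR n f + f n.
Proof. rewrite seq_S, map_app, sumR_app. unfold sumR at 2; simpl; lra. Qed.

Lemma SR_ext (n : nat) (f g : nat -> R) :
  (forall k, (k < n)%nat -> f k = g k) -> SR n f = SR n g.
Proof. induction n; intros H; [reflexivity|]. rewrite !SR_S, IHn, H; auto. Qed.

Lemma SR_le (n : nat) (f g : nat -> R) :
  (forall k, (k < n)%nat -> f k <= g k) -> SR n f <= SR n g.
Proof.
  induction n; intros H; [simpl; lra|]. rewrite !SR_S.
  assert (SR n f <= SR n g) by (apply IHn; auto). specialize (H n (Nat.lt_succ_diag_r n)). lra.
Qed.

Lemma SR_plus (n : nat) (f g : nat -> R) : SR n (fun k => f k + g k) = SR n f + SR n g.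
Proof. induction n; [simpl; lra|]. rewrite !SR_S, IHn. lra. Qed.

Lemma SR_minus (n : nat) (f g : nat -> R) : SR n (fun k => f k - g k) = SR n f - SR n g.
Proof. induction n; [simpl; lra|]. rewrite !SR_S, IHn. lra. Qed.

Lemma SR_scal (n : nat) (c : R) (f : nat -> R) : SR n (fun k => c * f k) = c * SR n f.
Proof. induction n; [simpl; lra|]. rewrite !SR_S, IHn. lra. Qed.

Lemma SR_const (n : nat) (c : R) : SR n (fun _ => c) = INR n * c.
Proof. induction n; [simpl; lra|]. rewrite !SR_S, IHn, S_INR. lra. Qed.

Lemma SR_nonneg (n : nat) (f : nat -> R) :
  (forall k, (k < n)%nat -> 0 <= f k) -> 0 <= SR n f.
Proof. intros H. rewrite <- (Rmult_0_r (INR n)), <- SR_const. apply SR_le; auto. Qed.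

Lemma SR_term (n : nat) (f : nat -> R) (k : nat) :
  (forall k, (k < n)%nat -> 0 <= f k) -> (k < n)%nat -> f k <= SR n f.
Proof.
  induction n; intros H Hk; [lia|]. rewrite SR_S.
  assert (0 <= SR n f) by (apply SR_nonneg; auto).
  specialize (H n ltac:(lia)) as Hn.
  destruct (Nat.eq_dec k n) as [->|Hkn]; [lra|].
  assert (f k <= SR n f) by (apply IHn; auto; lia). lra.
Qed.

Lemma SR_zero (n : nat) (f : nat -> R) :
  (forall k, (k < n)%nat -> 0 <= f k) -> SR n f = 0 -> forall k, (k < n)%nat -> f k = 0.
Proof. intros H H0 k Hk. pose proof (SR_term n f k H Hk). pose proof (H k Hk). lra. Qed.

Lemma SR_abs (n : nat) (f : nat -> R) : Rabs (SR n f) <= SR n (fun k => Rabs (f k)).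
Proof.
  induction n; [simpl; rewrite Rabs_R0; lra|]. rewrite !SR_S.
  pose proof (Rabs_triang (SR n f) (f n)). lra.
Qed.

Lemma SR_trunc (n i : nat) (g : nat -> R) :
  (i <= n)%nat -> SR n (fun k => if Nat.ltb k i then g k else 0) = SR i g.
Proof.
  induction n; intros H.
  - replace i with 0%nat by lia. reflexivity.
  - destruct (Nat.eq_dec i (S n)) as [->|Hi].
    + apply SR_ext. intros k Hk. rewrite (proj2 (Nat.ltb_lt _ _)) by lia. auto.
    + rewrite SR_S, IHn by lia. rewrite (proj2 (Nat.ltb_ge _ _)) by lia. lra.
Qed.

Lemma SR_indic (n t : nat) (c : R) :
  (t <= n)%nat -> SR n (fun k => if Nat.ltb k t then c else 0) = INR t * c.
Proof. intros H. rewrite (SR_trunc n t (fun _ => c)) by auto. apply SR_const. Qed.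

Lemma SR_skip (n k : nat) (g : nat -> R) :
  (k < n)%nat -> SR n (fun j => if Nat.eqb j k then 0 else g j) = SR n g - g k.
Proof.
  induction n; intros H; [lia|]. rewrite !SR_S. destruct (Nat.eq_dec k n) as [->|Hkn].
  - rewrite Nat.eqb_refl, (SR_ext n _ g); [lra|].
    intros j Hj. rewrite (proj2 (Nat.eqb_neq _ _)) by lia. auto.
  - rewrite IHn by lia. rewrite (proj2 (Nat.eqb_neq _ _)) by lia. lra.
Qed.

Lemma len_filter (n : nat) (f : nat -> bool) :
  INR (length (filter f (seq 0 n))) = SR n (fun j => if f j then 1 else 0).
Proof.
  induction n; [reflexivity|].
  rewrite SR_S, seq_S, filter_app, length_app, plus_INR, IHn. simpl. destruct (f n); simpl; lra.
Qed.

Lemma argmax (n : nat) (f : nat -> R) :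
  (0 < n)%nat -> exists k, (k < n)%nat /\ forall j, (j < n)%nat -> f j <= f k.
Proof.
  induction n; intros H; [lia|]. destruct (Nat.eq_dec n 0) as [->|Hn].
  - exists 0%nat. split; [lia|]. intros j Hj. replace j with 0%nat by lia. lra.
  - destruct IHn as [k [Hk Hm]]; [lia|]. destruct (Rle_dec (f n) (f k)).
    + exists k. split; [lia|]. intros j Hj.
      destruct (Nat.eq_dec j n) as [->|]; auto. apply Hm; lia.
    + exists n. split; [lia|]. intros j Hj.
      destruct (Nat.eq_dec j n) as [->|]; [lra|]. specialize (Hm j ltac:(lia)). lra.
Qed.

(** * A Collatz-Wielandt bound for nonnegative matrices *)

Definition eigenpair (n : nat) (B : nat -> nat -> R) (rho : R) (w : nat -> R) : Prop :=
  (exists j, (j < n)%nat /\ w j <> 0) /\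
  forall k, (k < n)%nat -> SR n (fun j => B k j * w j) = rho * w k.

Lemma rt_invariant (Rel : nat -> nat -> Prop) (P : nat -> Prop) :
  (forall a b, P a -> Rel a b -> P b) ->
  forall u v, clos_refl_trans nat Rel u v -> P u -> P v.
Proof. intros H u v Huv. induction Huv; eauto. Qed.

Section CollatzWielandt.
Variables (n : nat) (B : nat -> nat -> R) (x : nat -> R) (th rho : R) (w : nat -> R).
Hypothesis B_nonneg : forall k j, 0 <= B k j.
Hypothesis x_pos : forall k, 0 < x k.
Hypothesis Bx_le : forall k, (k < n)%nat -> SR n (fun j => B k j * x j) <= th * x k.
Hypothesis eig : eigenpair n B rho w.

Let u (k : nat) : R := w k / x k.

Lemma cw_row (k : nat) :
  (k < n)%nat -> Rabs rho * x k * Rabs (u k) <= SR n (fun j => B k j * x j * Rabs (u j)).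
Proof.
  intros Hk. destruct eig as [_ Heig].
  assert (Hw : forall j, w j = x j * u j) by (intros j; unfold u; field; specialize (x_pos j); lra).
  replace (Rabs rho * x k * Rabs (u k)) with (Rabs (rho * w k)).
  - rewrite <- Heig by auto. eapply Rle_trans; [apply SR_abs|]. right. apply SR_ext. intros j Hj.
    rewrite Hw, !Rabs_mult, (Rabs_right (B k j)), (Rabs_right (x j)); try ring.
    + specialize (x_pos j); lra.
    + specialize (B_nonneg k j); lra.
  - rewrite Hw, !Rabs_mult, (Rabs_right (x k)) by (specialize (x_pos k); lra). ring.
Qed.

Lemma cw_row_max (k : nat) (M : R) :
  (forall j, (j < n)%nat -> Rabs (u j) <= M) ->
  SR n (fun j => B k j * x j * Rabs (u j)) <= M * SR n (fun j => B k j * x j).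
Proof.
  intros HM. rewrite <- SR_scal. apply SR_le. intros j Hj.
  specialize (HM j Hj). specialize (B_nonneg k j). specialize (x_pos j).
  assert (0 <= B k j * x j) by nra. nra.
Qed.

Lemma cw_max_coord :
  (0 < n)%nat -> exists k0, (k0 < n)%nat /\ 0 < Rabs (u k0) /\
    forall j, (j < n)%nat -> Rabs (u j) <= Rabs (u k0).
Proof.
  intros Hn. destruct (argmax n (fun k => Rabs (u k)) Hn) as [k0 [Hk0 Hmax]].
  exists k0. split; [auto|]. split; [|auto].
  destruct eig as [[j [Hj Hwj]] _]. specialize (Hmax j Hj). simpl in Hmax.
  assert (u j <> 0) by (unfold u; specialize (x_pos j); intro Hu; apply Hwj;
    apply (f_equal (fun y => y * x j)) in Hu; field_simplify in Hu; lra).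
  pose proof (Rabs_pos_lt _ H). lra.
Qed.

Lemma cw_bound : (0 < n)%nat -> Rabs rho <= th.
Proof.
  intros Hn. destruct (cw_max_coord Hn) as [k0 [Hk0 [HM Hmax]]].
  pose proof (cw_row k0 Hk0). pose proof (cw_row_max k0 _ Hmax). pose proof (Bx_le k0 Hk0).
  specialize (x_pos k0).
  apply Rmult_le_reg_r with (x k0 * Rabs (u k0)); nra.
Qed.

Variable Rel : nat -> nat -> Prop.
Hypothesis Rel_support : forall a b, Rel a b -> (b < n)%nat /\ 0 < B a b.
Hypothesis Rel_connected :
  forall a b, (a < n)%nat -> (b < n)%nat -> clos_refl_trans nat Rel a b.

Lemma cw_equality : (0 < n)%nat -> Rabs rho = th ->
  forall k, (k < n)%nat -> SR n (fun j => B k j * x j) = th * x k.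
Proof.
  intros Hn Habs. destruct (cw_max_coord Hn) as [k0 [Hk0 [HM Hmax]]].
  set (M := Rabs (u k0)) in *.
  (* At a maximal coordinate the chain of inequalities is tight. *)
  assert (Htight : forall k, (k < n)%nat -> Rabs (u k) = M ->
            SR n (fun j => B k j * x j) = th * x k /\
            forall j, Rel k j -> Rabs (u j) = M).
  { intros k Hk HuM. pose proof (cw_row k Hk) as H1. pose proof (cw_row_max k M Hmax) as H2.
    pose proof (Bx_le k Hk) as H3. specialize (x_pos k) as Hxk. rewrite Habs, HuM in H1.
    split.
    - apply Rmult_eq_reg_l with M; nra.
    - intros j Hrel. destruct (Rel_support k j Hrel) as [Hj Hb].
      set (g := fun l => B k l * x l * (M - Rabs (u l))).
      assert (Hg0 : forall l, (l < n)%nat -> 0 <= g l).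
      { intros l Hl. unfold g. specialize (Hmax l Hl). specialize (B_nonneg k l).
        specialize (x_pos l). assert (0 <= B k l * x l) by nra. nra. }
      assert (Hgsum : SR n g = 0).
      { assert (SR n g = M * SR n (fun l => B k l * x l) - SR n (fun l => B k l * x l * Rabs (u l)))
          by (rewrite <- SR_scal, <- SR_minus; apply SR_ext; intros; unfold g; ring).
        nra. }
      pose proof (SR_zero n g Hg0 Hgsum j Hj) as Hgj. unfold g in Hgj.
      specialize (x_pos j). assert (0 < B k j * x j) by nra.
      apply Rmult_integral in Hgj. destruct Hgj; [lra|]. lra. }
  intros k Hk. apply Htight; auto.
  apply (rt_invariant Rel (fun v => (v < n)%nat /\ Rabs (u v) = M)) with (u := k0);
    [| apply Rel_connected; auto | split; auto].
  intros a b [Ha HuM] Hab. split; [apply (Rel_support a b Hab)|].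
  apply (proj2 (Htight a Ha HuM)); auto.
Qed.

End CollatzWielandt.

(** * Matrices with ordered row sums *)

Section OrderedRowSums.
Variables (n i : nat) (B : nat -> nat -> R) (r : nat -> R) (N th : R).
Hypothesis B_nonneg : forall k j, 0 <= B k j.
Hypothesis B_diag : forall k, B k k = 0.
Hypothesis B_offdiag : forall k j, j <> k -> B k j <= N.
Hypothesis row_sums : forall k, r k = SR n (B k).
Hypothesis r_tail : forall k, (i <= k)%nat -> (k < n)%nat -> r k <= r i.
Hypothesis r_head : forall k, (k < i)%nat -> r i <= r k.
Hypothesis i_lt_n : (i < n)%nat.
Hypothesis th_root : th * (th + N) = r i * (th + N) + N * SR i (fun k => r k - r i).
Hypothesis thN_pos : 0 < th + N.

(* The test vector is x_k = 1 + excess k: rows before [i] are raised in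
   proportion to how much their row sum exceeds [r i]. *)
Definition excess (k : nat) : R := if Nat.ltb k i then (r k - r i) / (th + N) else 0.

Definition slack (k : nat) : R :=
  SR n (fun j => if Nat.eqb j k then 0 else (N - B k j) * excess j).

Lemma excess_nonneg (k : nat) : 0 <= excess k.
Proof.
  unfold excess. destruct (Nat.ltb k i) eqn:E; [|lra].
  apply Nat.ltb_lt, r_head in E. unfold Rdiv. apply Rmult_le_pos; [lra|]. apply Rlt_le, Rinv_0_lt_compat; lra.
Qed.

Lemma slack_nonneg (k : nat) : 0 <= slack k.
Proof.
  apply SR_nonneg. intros j _. destruct (Nat.eqb j k) eqn:E; [lra|].
  apply Nat.eqb_neq, B_offdiag in E. pose proof (excess_nonneg j). nra.
Qed.

(* By the defining equation of [th], N times the total excess is [th - r i]. *)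
Lemma N_total_excess : N * SR n excess = th - r i.
Proof.
  unfold excess. rewrite (SR_trunc n i (fun k => (r k - r i) / (th + N))) by lia.
  rewrite (SR_ext i _ (fun k => / (th + N) * (r k - r i))) by (intros; unfold Rdiv; ring).
  rewrite SR_scal.
  apply Rmult_eq_reg_r with (th + N); [|lra]. field_simplify; [|lra]. lra.
Qed.

(* Row [k] of [B x] equals th x_k, up to the nonpositive tail defect
   r_k - r_i (for k >= i) and the nonnegative slack. *)
Lemma test_vector_row (k : nat) : (k < n)%nat ->
  SR n (fun j => B k j * (1 + excess j)) =
  th * (1 + excess k) + (if Nat.ltb k i then 0 else r k - r i) - slack k.
Proof.
  intros Hk. unfold slack.
  rewrite (SR_skip n k (fun j => (N - B k j) * excess j)) by auto.
  rewrite (SR_ext n (fun j => (N - B k j) * excess j)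
    (fun j => N * excess j - B k j * excess j)) by (intros; ring).
  rewrite B_diag, SR_minus, SR_scal, N_total_excess.
  rewrite (SR_ext n (fun j => B k j * (1 + excess j))
    (fun j => B k j + B k j * excess j)) by (intros; ring).
  rewrite SR_plus, <- row_sums.
  unfold excess at 2 4. destruct (Nat.ltb k i); [field; lra | ring].
Qed.

Lemma test_vector_le (k : nat) : (k < n)%nat ->
  SR n (fun j => B k j * (1 + excess j)) <= th * (1 + excess k).
Proof.
  intros Hk. rewrite test_vector_row by auto. pose proof (slack_nonneg k).
  destruct (Nat.ltb k i) eqn:E; [lra|]. apply Nat.ltb_ge in E. specialize (r_tail k E Hk). lra.
Qed.

Lemma test_vector_pos (k : nat) : 0 < 1 + excess k.
Proof. pose proof (excess_nonneg k). lra. Qed.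

Theorem ordered_rows_bound (rho : R) (w : nat -> R) :
  eigenpair n B rho w -> Rabs rho <= th.
Proof.
  intros Heig. apply (cw_bound n B (fun k => 1 + excess k) th rho w); auto.
  - apply test_vector_pos.
  - apply test_vector_le.
  - lia.
Qed.

Theorem ordered_rows_equality (rho : R) (w : nat -> R) (Rel : nat -> nat -> Prop) :
  eigenpair n B rho w ->
  (forall a b, Rel a b -> (b < n)%nat /\ 0 < B a b) ->
  (forall a b, (a < n)%nat -> (b < n)%nat -> clos_refl_trans nat Rel a b) ->
  Rabs rho = th ->
  forall k, (k < n)%nat ->
    ((i <= k)%nat -> r k = r i) /\
    (forall j, (j < i)%nat -> j <> k -> r i < r j -> B k j = N).
Proof.
  intros Heig HRel Hconn Habs k Hk.
  pose proof (cw_equality n B (fun k => 1 + excess k) th rho w B_nonneg test_vector_pos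
    test_vector_le Heig Rel HRel Hconn ltac:(lia) Habs k Hk) as Htight.
  rewrite test_vector_row in Htight by auto.
  assert (Htail : (if Nat.ltb k i then 0 else r k - r i) = 0 /\ slack k = 0).
  { pose proof (slack_nonneg k). destruct (Nat.ltb k i) eqn:E; [lra|].
    apply Nat.ltb_ge in E. specialize (r_tail k E Hk). lra. }
  destruct Htail as [Htail Hslack]. split.
  - intros Hik. rewrite (proj2 (Nat.ltb_ge _ _) Hik) in Htail. lra.
  - intros j Hj Hjk Hrj.
    assert (Hterm : forall l, (l < n)%nat ->
              0 <= (if Nat.eqb l k then 0 else (N - B k l) * excess l)).
    { intros l _. destruct (Nat.eqb l k) eqn:E; [lra|].
      apply Nat.eqb_neq, B_offdiag in E. pose proof (excess_nonneg l). nra. }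
    pose proof (SR_zero n _ Hterm Hslack j ltac:(lia)) as Hj0. simpl in Hj0.
    rewrite (proj2 (Nat.eqb_neq _ _) Hjk) in Hj0.
    assert (0 < excess j).
    { unfold excess. rewrite (proj2 (Nat.ltb_lt _ _) Hj). apply Rdiv_lt_0_compat; lra. }
    apply Rmult_integral in Hj0. lra.
Qed.

End OrderedRowSums.

(** * Degrees, degree powers and the weighted adjacency matrix *)

Lemma fold_max_ge (l : list R) (y : R) : In y l -> y <= fold_right Rmax 0 l.
Proof.
  induction l as [|a l IH]; simpl; [tauto|]. intros [->|H]; [apply Rmax_l|].
  eapply Rle_trans; [apply IH; auto | apply Rmax_r].
Qed.

Lemma fold_max_le (l : list R) (c : R) :
  (forall y, In y l -> y <= c) -> 0 <= c -> fold_right Rmax 0 l <= c.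
Proof. induction l; simpl; intros H Hc; auto. apply Rmax_lub; auto. Qed.

Lemma fold_max_nonneg (l : list R) : 0 <= fold_right Rmax 0 l.
Proof. induction l; simpl; [lra|]. eapply Rle_trans; [eassumption | apply Rmax_r]. Qed.

Lemma Aentry_01 (adj : nat -> nat -> bool) (k j : nat) : 0 <= Aentry adj k j <= 1.
Proof. unfold Aentry; destruct (adj k j); lra. Qed.

Lemma dpow_pos (n : nat) (adj : nat -> nat -> bool) (alpha : R) (k : nat) :
  0 < dpow n adj alpha k.
Proof. apply exp_pos. Qed.

Lemma dpow_zero (n : nat) (adj : nat -> nat -> bool) (k : nat) : dpow n adj 0 k = 1.
Proof. unfold dpow, Rpower. rewrite Rmult_0_l. apply exp_0. Qed.

Lemma dpow_deg (n : nat) (adj : nat -> nat -> bool) (alpha : R) (k l : nat) :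
  deg n adj k = deg n adj l -> dpow n adj alpha k = dpow n adj alpha l.
Proof. unfold dpow. intros ->. reflexivity. Qed.

Lemma dpow_inj (n : nat) (adj : nat -> nat -> bool) (alpha : R) (k l : nat) :
  alpha <> 0 -> 1 <= INR (deg n adj k) -> 1 <= INR (deg n adj l) ->
  dpow n adj alpha k = dpow n adj alpha l -> deg n adj k = deg n adj l.
Proof.
  unfold dpow, Rpower. intros Ha Hk Hl H. apply exp_inv in H.
  apply INR_eq, ln_inv; try lra. apply Rmult_eq_reg_l with alpha; auto.
Qed.

Lemma dpow_lt (n : nat) (adj : nat -> nat -> bool) (alpha : R) (k l : nat) :
  0 < alpha -> 1 <= INR (deg n adj k) -> INR (deg n adj k) < INR (deg n adj l) ->
  dpow n adj alpha k < dpow n adj alpha l.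
Proof.
  unfold dpow, Rpower. intros Ha Hk Hkl. apply exp_increasing.
  apply Rmult_lt_compat_l; auto. apply ln_increasing; lra.
Qed.

Lemma dpow_lt_inv (n : nat) (adj : nat -> nat -> bool) (alpha : R) (k l : nat) :
  1 <= INR (deg n adj k) -> INR (deg n adj k) < INR (deg n adj l) ->
  dpow n adj alpha k < dpow n adj alpha l -> 0 < alpha.
Proof.
  unfold dpow, Rpower. intros Hk Hkl H. apply exp_lt_inv in H.
  assert (ln (INR (deg n adj k)) < ln (INR (deg n adj l))) by (apply ln_increasing; lra).
  destruct (Rtotal_order alpha 0) as [Ha|[->|Ha]]; nra.
Qed.

(* The matrix D^{-alpha} A D^{alpha}: similar to A, with row sums (^alpha m)_k. *)
Definition wadj (n : nat) (adj : nat -> nat -> bool) (alpha : R) (k j : nat) : R :=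
  Aentry adj k j * (dpow n adj alpha j / dpow n adj alpha k).

(* The larger root of th (th + N) = a (th + N) + N S. *)
Definition root_bound (a N S : R) : R := (a - N + sqrt ((a + N) ^ 2 + 4 * N * S)) / 2.

Lemma root_bound_spec (a N S : R) : 0 <= a -> 0 < N -> 0 <= S ->
  a <= root_bound a N S /\
  (root_bound a N S * (root_bound a N S + N) = a * (root_bound a N S + N) + N * S).
Proof.
  intros Ha HN HS. unfold root_bound. set (q := (a + N) ^ 2 + 4 * N * S).
  assert (Hq : 0 <= q) by (unfold q; nra).
  pose proof (sqrt_sqrt q Hq). pose proof (sqrt_pos q).
  assert (a + N <= sqrt q) by (unfold q in *; nra).
  split; [lra|]. unfold q in *. nra.
Qed.

Lemma root_bound_no_excess (a N : R) : 0 <= a + N -> root_bound a N 0 = a.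
Proof.
  intros H. unfold root_bound. rewrite Rmult_0_r, Rplus_0_r, <- Rsqr_pow2, sqrt_Rsqr by auto.
  field.
Qed.

Section Graph.
Variables (n : nat) (adj : nat -> nat -> bool) (alpha : R).
Hypothesis Hg : simple_graph n adj.
Hypothesis Hc : connected n adj.
Hypothesis Hn : (2 <= n)%nat.

Local Notation p := (dpow n adj alpha).
Local Notation m := (gavg n adj alpha).
Local Notation N := (Nmax n adj alpha).

Lemma deg_sum (k : nat) : INR (deg n adj k) = SR n (fun j => Aentry adj k j).
Proof. apply len_filter. Qed.

Lemma gavg_wadj (k : nat) : m k = SR n (wadj n adj alpha k).
Proof.
  unfold gavg, wadj. pose proof (dpow_pos n adj alpha k).
  unfold Rdiv at 1. rewrite Rmult_comm, <- SR_scal. apply SR_ext. intros j _.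
  unfold Aentry. destruct (adj k j); field; lra.
Qed.

Lemma gavg_mul (k : nat) : SR n (fun j => Aentry adj k j * p j) = m k * p k.
Proof.
  rewrite gavg_wadj, Rmult_comm, <- SR_scal. apply SR_ext. intros j _. unfold wadj.
  pose proof (dpow_pos n adj alpha k). field. lra.
Qed.

Lemma wadj_nonneg (k j : nat) : 0 <= wadj n adj alpha k j.
Proof.
  unfold wadj. pose proof (Aentry_01 adj k j). pose proof (dpow_pos n adj alpha j).
  pose proof (dpow_pos n adj alpha k). assert (0 < p j / p k) by (apply Rdiv_lt_0_compat; auto).
  nra.
Qed.

Lemma gavg_nonneg (k : nat) : 0 <= m k.
Proof. rewrite gavg_wadj. apply SR_nonneg. intros; apply wadj_nonneg. Qed.

Lemma wadj_diag (k : nat) : wadj n adj alpha k k = 0.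
Proof. unfold wadj, Aentry. destruct Hg as [_ [-> _]]. ring. Qed.

Lemma Nmax_ge (k j : nat) : adj k j = true -> p j / p k <= N.
Proof.
  intros H. destruct Hg as [_ [_ Hb]]. destruct (Hb _ _ H) as [Hk Hj].
  apply fold_max_ge, in_flat_map. exists k. split; [apply in_seq; lia|].
  apply (in_map (fun j0 => p j0 / p k)), filter_In. split; auto. apply in_seq; lia.
Qed.

Lemma Nmax_le (c : R) :
  (forall k j, adj k j = true -> p j / p k <= c) -> 0 <= c -> N <= c.
Proof.
  intros H Hc0. apply fold_max_le; auto. intros y Hy.
  apply in_flat_map in Hy. destruct Hy as [k [_ Hy]]. apply in_map_iff in Hy.
  destruct Hy as [j [<- Hin]]. apply filter_In in Hin. apply H, Hin.
Qed.

Lemma wadj_offdiag (k j : nat) : wadj n adj alpha k j <= N.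
Proof.
  unfold wadj, Aentry. destruct (adj k j) eqn:E.
  - rewrite Rmult_1_l. apply Nmax_ge; auto.
  - rewrite Rmult_0_l. apply fold_max_nonneg.
Qed.


Lemma has_neighbor (k : nat) : (k < n)%nat -> exists z, adj k z = true.
Proof.
  intros Hk. set (v := if Nat.eqb k 0 then 1%nat else 0%nat).
  assert (Hv : (v < n)%nat /\ v <> k).
  { unfold v. destruct (Nat.eqb k 0) eqn:E; [apply Nat.eqb_eq in E | apply Nat.eqb_neq in E]; lia. }
  pose proof (clos_rt_rt1n _ _ _ _ (Hc k v Hk (proj1 Hv))) as Hpath.
  destruct Hpath as [|y Hstep]; [tauto|]. eauto.
Qed.

Lemma deg_pos (k : nat) : (k < n)%nat -> 1 <= INR (deg n adj k).
Proof.
  intros Hk. destruct (has_neighbor k Hk) as [z Hz]. destruct Hg as [_ [_ Hb]].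
  destruct (Hb _ _ Hz) as [_ Hzn]. rewrite deg_sum.
  replace 1 with (Aentry adj k z) by (unfold Aentry; rewrite Hz; auto).
  apply (SR_term n (fun j => Aentry adj k j)); auto. intros; apply Aentry_01.
Qed.

Lemma Nmax_pos : 0 < N.
Proof.
  destruct (has_neighbor 0 ltac:(lia)) as [z Hz].
  pose proof (Nmax_ge 0 z Hz). pose proof (dpow_pos n adj alpha z).
  pose proof (dpow_pos n adj alpha 0). assert (0 < p z / p 0%nat) by (apply Rdiv_lt_0_compat; auto).
  lra.
Qed.

Lemma deg_deficit (k : nat) : (k < n)%nat ->
  INR (n - 1) - INR (deg n adj k) =
  SR n (fun j => (if Nat.eqb j k then 0 else 1) - Aentry adj k j) /\
  forall j, 0 <= (if Nat.eqb j k then 0 else 1) - Aentry adj k j.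
Proof.
  intros Hk. split.
  - rewrite SR_minus, SR_skip, SR_const, <- deg_sum, minus_INR by lia. simpl. ring.
  - intros j. destruct (Nat.eqb j k) eqn:E.
    + apply Nat.eqb_eq in E as ->. unfold Aentry. destruct Hg as [_ [-> _]]. lra.
    + pose proof (Aentry_01 adj k j). lra.
Qed.

Lemma deg_le (k : nat) : (k < n)%nat -> (deg n adj k <= n - 1)%nat.
Proof.
  intros Hk. destruct (deg_deficit k Hk) as [H1 H2].
  pose proof (SR_nonneg n _ (fun j _ => H2 j)). apply INR_le. lra.
Qed.

Lemma deg_full (k : nat) : (k < n)%nat ->
  (forall j, (j < n)%nat -> j <> k -> adj k j = true) -> deg n adj k = (n - 1)%nat.
Proof.
  intros Hk H. destruct (deg_deficit k Hk) as [H1 _]. apply INR_eq.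
  enough (SR n (fun j => (if Nat.eqb j k then 0 else 1) - Aentry adj k j) = 0) by lra.
  transitivity (SR n (fun _ => 0)); [|rewrite SR_const; ring].
  apply SR_ext. intros j Hj. unfold Aentry.
  destruct (Nat.eqb j k) eqn:E.
  - apply Nat.eqb_eq in E as ->. destruct Hg as [_ [-> _]]. lra.
  - apply Nat.eqb_neq in E. rewrite H; auto. lra.
Qed.

Lemma deg_full_inv (k : nat) : (k < n)%nat -> deg n adj k = (n - 1)%nat ->
  forall j, (j < n)%nat -> j <> k -> adj k j = true.
Proof.
  intros Hk Hd j Hj Hjk. destruct (deg_deficit k Hk) as [H1 H2]. rewrite Hd, Rminus_diag in H1.
  pose proof (SR_zero n _ (fun l _ => H2 l) (eq_sym H1) j Hj) as H. simpl in H.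
  rewrite (proj2 (Nat.eqb_neq _ _) Hjk) in H. unfold Aentry in H. destruct (adj k j); auto. lra.
Qed.

Lemma eigenpair_wadj (rho : R) (z : nat -> R) :
  eigenpair n (Aentry adj) rho z -> eigenpair n (wadj n adj alpha) rho (fun k => z k / p k).
Proof.
  intros [[j [Hj Hzj]] Heig]. split.
  - exists j. split; auto. pose proof (dpow_pos n adj alpha j). intro H0. apply Hzj.
    apply (f_equal (fun y => y * p j)) in H0. field_simplify in H0; lra.
  - intros k Hk. pose proof (dpow_pos n adj alpha k).
    transitivity (/ p k * SR n (fun j => Aentry adj k j * z j)).
    + rewrite <- SR_scal. apply SR_ext. intros l _. unfold wadj.
      pose proof (dpow_pos n adj alpha l). field. lra.
    + rewrite Heig by auto. field. lra.
Qed.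


(** ** Graphs with a dominating prefix *)

Lemma prefix_neighbors (t k : nat) : (t <= n)%nat -> (k < n)%nat ->
  (forall l, (l < t)%nat -> deg n adj l = (n - 1)%nat) ->
  SR n (fun j => Aentry adj k j * (if Nat.ltb j t then 1 else 0)) =
  if Nat.ltb k t then INR t - 1 else INR t.
Proof.
  intros Ht Hk Hfull. destruct Hg as [Hsym [Hirr _]].
  destruct (Nat.ltb k t) eqn:Ekt.
  - apply Nat.ltb_lt in Ekt.
    rewrite (SR_ext n _ (fun j => (if Nat.ltb j t then 1 else 0) - (if Nat.eqb j k then 1 else 0))).
    + rewrite SR_minus, SR_indic by auto.
      rewrite (SR_ext n (fun j => if Nat.eqb j k then 1 else 0) (fun j => 1 - (if Nat.eqb j k then 0 else 1)))
        by (intros j _; destruct (Nat.eqb j k); ring).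
      rewrite SR_minus, SR_skip, !SR_const by auto. ring.
    + intros j Hj. unfold Aentry. destruct (Nat.eqb j k) eqn:E.
      * apply Nat.eqb_eq in E as ->. rewrite Hirr, (proj2 (Nat.ltb_lt _ _) Ekt). ring.
      * apply Nat.eqb_neq in E. destruct (Nat.ltb j t) eqn:Ejt; [|ring].
        rewrite Hsym, (deg_full_inv j) by (try apply Nat.ltb_lt in Ejt; auto; lia). ring.
  - apply Nat.ltb_ge in Ekt.
    transitivity (SR n (fun j => if Nat.ltb j t then 1 else 0)); [|rewrite SR_indic by auto; ring].
    apply SR_ext.
    intros j Hj. unfold Aentry. destruct (Nat.ltb j t) eqn:Ejt; [|ring]. apply Nat.ltb_lt in Ejt.
    rewrite Hsym, (deg_full_inv j) by (auto; lia). ring.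
Qed.

Lemma prefix_row (t k : nat) (a b : R) : (t <= n)%nat -> (k < n)%nat ->
  (forall l, (l < t)%nat -> deg n adj l = (n - 1)%nat) ->
  SR n (fun j => Aentry adj k j * (if Nat.ltb j t then a else b)) =
  if Nat.ltb k t then (INR t - 1) * a + (INR n - INR t) * b
  else INR t * a + (INR (deg n adj k) - INR t) * b.
Proof.
  intros Ht Hk Hfull.
  rewrite (SR_ext n _ (fun j => (a - b) * (Aentry adj k j * (if Nat.ltb j t then 1 else 0))
                                 + b * Aentry adj k j))
    by (intros j _; destruct (Nat.ltb j t); ring).
  rewrite SR_plus, !SR_scal, <- deg_sum, prefix_neighbors by auto.
  destruct (Nat.ltb k t) eqn:Ekt; [|ring]. apply Nat.ltb_lt in Ekt.
  rewrite (Hfull k Ekt), minus_INR by lia. simpl. ring.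
Qed.

Lemma prefix_lower_bound (t d : nat) (rho : R) : (1 <= t)%nat -> (t < n)%nat ->
  (forall l, (l < t)%nat -> deg n adj l = (n - 1)%nat) ->
  (forall k, (t <= k)%nat -> (k < n)%nat -> deg n adj k = d) ->
  is_spectral_radius n adj rho ->
  (INR d - 1 + sqrt ((INR d + 1) ^ 2 + 4 * (INR t * (INR n - 1 - INR d)))) / 2 <= rho.
Proof.
  intros Ht1 Htn Hfull Hd [_ Hmax].
  set (q := (INR d + 1) ^ 2 + 4 * (INR t * (INR n - 1 - INR d))).
  assert (Hdn : INR d <= INR n - 1).
  { rewrite <- (Hd t) by lia. pose proof (deg_le t Htn). apply le_INR in H.
    rewrite minus_INR in H by lia. simpl in H. lra. }
  assert (Hq : 0 <= q) by (unfold q; pose proof (pos_INR t); pose proof (pos_INR d); nra).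
  pose proof (sqrt_sqrt q Hq) as Hs. set (s := sqrt q) in *.
  set (th := (INR d - 1 + s) / 2).
  apply Hmax. exists (fun j => if Nat.ltb j t then INR n - INR t else th - INR t + 1). split.
  - exists 0%nat. split; [lia|]. rewrite (proj2 (Nat.ltb_lt _ _)) by lia.
    apply lt_INR in Htn. lra.
  - intros k Hk. rewrite prefix_row by (auto; lia).
    destruct (Nat.ltb k t) eqn:Hkt; [ring|].
    apply Nat.ltb_ge in Hkt. rewrite Hd by auto.
    assert (Hth : th * th = (INR d - 1) * th + INR d + INR t * (INR n - 1 - INR d))
      by (unfold th; unfold q in Hs; nra).
    nra.
Qed.

Lemma gavg_deg (k : nat) : (forall j, adj k j = true -> p j = p k) -> m k = INR (deg n adj k).
Proof.
  intros H. rewrite gavg_wadj, deg_sum. apply SR_ext. intros j _. unfold wadj, Aentry.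
  destruct (adj k j) eqn:E; [|ring]. rewrite H by auto.
  pose proof (dpow_pos n adj alpha k). field. lra.
Qed.

Lemma prefix_bidegreed (t d : nat) : (1 <= t)%nat -> (t < n)%nat ->
  (forall l, (l < t)%nat -> deg n adj l = (n - 1)%nat) ->
  (forall k, (t <= k)%nat -> (k < n)%nat -> deg n adj k = d) -> (d < n - 1)%nat ->
  bidegreed n adj.
Proof.
  intros Ht1 Htn Hfull Hd Hdn. exists (n - 1)%nat, d. split; [lia|]. split; [|split].
  - intros k Hk. destruct (le_lt_dec t k); [right | left]; auto.
  - exists 0%nat. split; [lia | apply Hfull; lia].
  - exists t. split; [lia | apply Hd; lia].
Qed.

Variable i : nat.
Hypothesis Hi : (i < n)%nat.
Hypothesis Hord : forall k l, (k <= l)%nat -> (l < n)%nat -> m l <= m k.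

Local Notation S_i := (SR i (fun k => m k - m i)).
Local Notation bound := (root_bound (m i) N S_i).

Lemma bound_spec : m i <= bound /\ (bound * (bound + N) = m i * (bound + N) + N * S_i).
Proof.
  apply root_bound_spec; [apply gavg_nonneg | apply Nmax_pos |].
  apply SR_nonneg. intros k Hk. pose proof (Hord k i ltac:(lia) Hi). lra.
Qed.

Lemma bound_nonneg : 0 <= bound.
Proof. pose proof (gavg_nonneg i). pose proof bound_spec. lra. Qed.

Lemma wadj_ordered_rows (rho : R) (w : nat -> R) :
  eigenpair n (wadj n adj alpha) rho w -> Rabs rho <= bound.
Proof.
  apply (ordered_rows_bound n i (wadj n adj alpha) m N bound wadj_nonneg wadj_diag
           (fun k j _ => wadj_offdiag k j) gavg_wadj); auto.
  - intros k Hk. apply Hord; lia.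
  - apply bound_spec.
  - pose proof bound_nonneg. pose proof Nmax_pos. lra.
Qed.

Lemma spectral_upper (rho : R) : is_spectral_radius n adj rho -> rho <= bound.
Proof.
  intros [[z Hz] _]. pose proof (wadj_ordered_rows _ _ (eigenpair_wadj rho z Hz)).
  pose proof (Rle_abs rho). lra.
Qed.

Lemma spectral_equality_rows (rho : R) : is_spectral_radius n adj rho -> rho = bound ->
  forall k, (k < n)%nat ->
    ((i <= k)%nat -> m k = m i) /\
    (forall j, (j < i)%nat -> j <> k -> m i < m j -> adj k j = true /\ p j / p k = N).
Proof.
  intros [[z Hz] _] Hrho k Hk.
  assert (Habs : Rabs rho = bound) by (rewrite Hrho; apply Rabs_right; pose proof bound_nonneg; lra).
  destruct bound_spec as [_ Hroot].
  destruct (ordered_rows_equality n i (wadj n adj alpha) m N bound wadj_nonneg wadj_diag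
              (fun k j _ => wadj_offdiag k j) gavg_wadj
              (fun k Hik Hkn => Hord i k Hik Hkn) (fun k Hki => Hord k i ltac:(lia) Hi) Hi Hroot
              ltac:(pose proof bound_nonneg; pose proof Nmax_pos; lra)
              rho _ (fun a b => adj a b = true) (eigenpair_wadj rho z Hz))
    with (k := k) as [Htail Hhead]; auto.
  - intros a b Hab. destruct Hg as [_ [_ Hb]]. split; [apply (Hb a b Hab)|].
    unfold wadj, Aentry. rewrite Hab, Rmult_1_l.
    apply Rdiv_lt_0_compat; apply dpow_pos.
  - split; auto. intros j Hj Hjk Hmj. specialize (Hhead j Hj Hjk Hmj).
    pose proof Nmax_pos. unfold wadj, Aentry in Hhead.
    destruct (adj k j); split; auto; lra.
Qed.

Lemma equality_constant (rho : R) : is_spectral_radius n adj rho -> rho = bound ->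
  ~ (exists j, (j < i)%nat /\ m i < m j) ->
  forall k l, (k < n)%nat -> (l < n)%nat -> m k = m l.
Proof.
  intros Hrho Heq Hnone.
  assert (H : forall k, (k < n)%nat -> m k = m i).
  { intros k Hk. destruct (le_lt_dec i k) as [Hik|Hki].
    - apply (spectral_equality_rows rho Hrho Heq k Hk); auto.
    - destruct (Rle_lt_or_eq_dec _ _ (Hord k i ltac:(lia) Hi)); auto.
      exfalso. eauto. }
  intros k l Hk Hl. rewrite (H k Hk), (H l Hl). reflexivity.
Qed.

Definition dominating_prefix (t : nat) : Prop :=
  (1 <= t <= i)%nat /\
  (forall k, (k < t)%nat -> m i < m k) /\
  (forall k, (t <= k)%nat -> (k < n)%nat -> m k = m i) /\
  (forall l k, (l < t)%nat -> (k < n)%nat -> k <> l -> adj k l = true /\ p l / p k = N).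

(* The least index [t] with (^alpha m)_t <= (^alpha m)_i yields the prefix. *)
Lemma equality_prefix (rho : R) : is_spectral_radius n adj rho -> rho = bound ->
  (exists j, (j < i)%nat /\ m i < m j) -> exists t, dominating_prefix t.
Proof.
  intros Hrho Heq [j0 [Hj0 Hmj0]].
  pose proof (spectral_equality_rows rho Hrho Heq) as Hrows.
  destruct (dec_inh_nat_subset_has_unique_least_element (fun k => m k <= m i))
    as [t [[Hti Hleast] _]]; [intros k; apply classic | exists i; lra |].
  assert (Hbefore : forall k, (k < t)%nat -> m i < m k).
  { intros k Hk. apply Rnot_le_lt. intro Hc0. specialize (Hleast k Hc0). lia. }
  assert (Hti' : (t <= i)%nat) by (apply Hleast; lra).
  assert (Ht1 : (1 <= t)%nat).
  { destruct t; [|lia]. pose proof (Hord 0%nat j0 ltac:(lia) ltac:(lia)). lra. }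
  exists t. split; [lia|]. split; [auto|]. split.
  - intros k Htk Hk. destruct (le_lt_dec i k); [apply (Hrows k Hk); auto|].
    pose proof (Hord t k Htk Hk). pose proof (Hord k i ltac:(lia) Hi). lra.
  - intros l k Hl Hk Hkl. apply (Hrows k Hk); auto; lia.
Qed.

Lemma prefix_full_degree (t : nat) : dominating_prefix t ->
  forall l, (l < t)%nat -> deg n adj l = (n - 1)%nat.
Proof.
  intros [Ht [_ [_ Hfull]]] l Hl. apply deg_full; [lia|]. intros k Hk Hkl.
  destruct Hg as [Hsym _]. rewrite Hsym. apply Hfull; auto.
Qed.

(* For alpha = 0 the averages are the degrees: the graph is a dominating
   prefix of [t] vertices joined to vertices of a common smaller degree. *)
Lemma prefix_alpha_zero (t : nat) : alpha = 0 -> dominating_prefix t ->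
  bidegreed n adj /\
  (forall k, (k < t)%nat -> deg n adj k = (n - 1)%nat) /\
  (forall k, (t <= k)%nat -> (k < n)%nat ->
     deg n adj k = deg n adj t /\ (deg n adj t < n - 1)%nat).
Proof.
  intros Ha0 Hpre. pose proof (prefix_full_degree t Hpre) as Hfull.
  destruct Hpre as [Ht [Hbefore [Hafter _]]].
  assert (Hmd : forall k, m k = INR (deg n adj k)).
  { intros k. apply gavg_deg. intros j _. subst alpha. rewrite !dpow_zero. reflexivity. }
  assert (Hdk : forall k, (t <= k)%nat -> (k < n)%nat -> deg n adj k = deg n adj t).
  { intros k Htk Hk. apply INR_eq. rewrite <- !Hmd, (Hafter k), (Hafter t) by lia. reflexivity. }
  assert (Hdt : (deg n adj t < n - 1)%nat).
  { apply INR_lt. rewrite <- (Hfull 0%nat), <- !Hmd, (Hafter t) by lia. apply Hbefore. lia. }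
  split; [apply (prefix_bidegreed t (deg n adj t)); auto; lia|].
  split; auto.
Qed.

Lemma prefix_tail_power (t : nat) : dominating_prefix t ->
  forall k, (t <= k)%nat -> (k < n)%nat -> p k = p 0%nat / N.
Proof.
  intros [Ht [_ [_ Hfull]]] k Htk Hk. destruct (Hfull 0%nat k ltac:(lia) Hk ltac:(lia)) as [_ H].
  pose proof (dpow_pos n adj alpha k). pose proof (dpow_pos n adj alpha 0).
  rewrite <- H. field. lra.
Qed.

(* For alpha <> 0, N = 1 would make all degree powers, hence all degrees,
   equal to those of the prefix, so all averages would coincide. *)
Lemma prefix_N_ne1 (t : nat) : alpha <> 0 -> dominating_prefix t -> N <> 1.
Proof.
  intros Ha0 Hpre HN1. pose proof (prefix_full_degree t Hpre) as Hdeg.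
  pose proof (prefix_tail_power t Hpre) as HpN. destruct Hpre as [Ht [Hbefore _]].
  assert (Hp : forall k, (k < n)%nat -> deg n adj k = (n - 1)%nat).
  { intros k Hk. rewrite <- (Hdeg 0%nat) by lia.
    apply (dpow_inj n adj alpha); [exact Ha0 | apply deg_pos; lia | apply deg_pos; lia |].
    destruct (le_lt_dec t k); [rewrite HpN, HN1 by auto; field|].
    apply dpow_deg. rewrite !Hdeg; auto; lia. }
  assert (Hm : forall k, (k < n)%nat -> m k = INR (n - 1)).
  { intros k Hk. rewrite <- (Hp k Hk). apply gavg_deg. intros j Hkj.
    destruct Hg as [_ [_ Hb]]. apply dpow_deg. rewrite !Hp; auto; apply (Hb k j Hkj). }
  specialize (Hbefore 0%nat ltac:(lia)). rewrite !Hm in Hbefore by lia. lra.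
Qed.

(* Two prefix vertices would see each other with ratio N both ways, forcing
   N^2 = 1: for alpha <> 0 the prefix is a single vertex. *)
Lemma prefix_single (t : nat) : alpha <> 0 -> dominating_prefix t -> t = 1%nat.
Proof.
  intros Ha0 Hpre. pose proof (prefix_N_ne1 t Ha0 Hpre) as HN1.
  destruct Hpre as [Ht [_ [_ Hfull]]].
  destruct (Nat.eq_dec t 1); auto. exfalso.
  pose proof (dpow_pos n adj alpha 0). pose proof (dpow_pos n adj alpha 1). pose proof Nmax_pos.
  destruct (Hfull 1%nat 0%nat ltac:(lia) ltac:(lia) ltac:(lia)) as [_ Hr10].
  destruct (Hfull 0%nat 1%nat ltac:(lia) ltac:(lia) ltac:(lia)) as [_ Hr01].
  assert (N * N = 1) by (rewrite <- Hr10 at 1; rewrite <- Hr01; field; lra). nra.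
Qed.

Lemma prefix_alpha_nonzero (t : nat) : alpha <> 0 -> dominating_prefix t ->
  alpha > 0 /\ bidegreed n adj /\ m 0%nat > m 1%nat /\
  (forall k, (1 <= k)%nat -> (k < n)%nat -> m k = m 1%nat) /\
  deg n adj 0 = (n - 1)%nat /\
  (forall k, (1 <= k)%nat -> (k < n)%nat ->
     deg n adj k = deg n adj 1 /\ (deg n adj 1 < n - 1)%nat).
Proof.
  intros Ha0 Hpre. pose proof (prefix_N_ne1 t Ha0 Hpre) as HN1.
  pose proof (prefix_full_degree t Hpre) as Hdeg. pose proof (prefix_tail_power t Hpre) as HpN.
  pose proof (prefix_single t Ha0 Hpre) as Ht1.
  destruct Hpre as [_ [Hbefore [Hafter Hfull]]]. subst t.
  pose proof Nmax_pos as HN. pose proof (dpow_pos n adj alpha 0) as Hp0.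
  assert (HN_gt1 : 1 < N).
  { destruct (Hfull 0%nat 1%nat ltac:(lia) ltac:(lia) ltac:(lia)) as [H10 _].
    destruct Hg as [Hsym _]. rewrite Hsym in H10. pose proof (Nmax_ge 0 1 H10) as Hr.
    rewrite (HpN 1%nat) in Hr by lia.
    replace (p 0%nat / N / p 0%nat) with (/ N) in Hr by (field; lra).
    assert (1 <= N * N) by (apply Rmult_le_reg_r with (/ N);
      [apply Rinv_0_lt_compat; lra | replace (N * N * / N) with N by (field; lra); lra]).
    nra. }
  assert (Hd1 : forall k, (1 <= k)%nat -> (k < n)%nat -> deg n adj k = deg n adj 1).
  { intros k H1k Hk.
    apply (dpow_inj n adj alpha); [exact Ha0 | apply deg_pos; lia | apply deg_pos; lia |].
    rewrite (HpN k), (HpN 1%nat) by lia. reflexivity. }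
  assert (Hp10 : p 1%nat < p 0%nat).
  { rewrite (HpN 1%nat) by lia. apply Rmult_lt_reg_r with N; [lra|].
    unfold Rdiv. rewrite Rmult_assoc, Rinv_l by lra. nra. }
  assert (Hdlt : (deg n adj 1 < n - 1)%nat).
  { pose proof (deg_le 1 ltac:(lia)).
    destruct (Nat.eq_dec (deg n adj 1) (n - 1)) as [E|]; [|lia].
    exfalso. rewrite <- (Hdeg 0%nat) in E by lia. apply (dpow_deg n adj alpha) in E. lra. }
  split.
  { apply (dpow_lt_inv n adj alpha 1 0); [apply deg_pos; lia | | exact Hp10].
    rewrite (Hdeg 0%nat) by lia. apply lt_INR. auto. }
  split; [apply (prefix_bidegreed 1 (deg n adj 1)); auto; lia|].
  split; [rewrite (Hafter 1%nat) by lia; apply Hbefore; lia|].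
  split; [intros k H1k Hk; rewrite (Hafter k), (Hafter 1%nat) by lia; reflexivity|].
  split; [apply Hdeg; lia|]. auto.
Qed.

(* Conversely, each extremal configuration attains the bound: it is an
   eigenvalue of A, computed from an explicit eigenvector.  When all averages
   coincide, S_i = 0 and (d_j^alpha) is such an eigenvector. *)
Lemma constant_attains (rho : R) : is_spectral_radius n adj rho ->
  (forall k l, (k < n)%nat -> (l < n)%nat -> m k = m l) -> bound <= rho.
Proof.
  intros [_ Hmax] Hall.
  assert (HS : S_i = 0).
  { rewrite (SR_ext i _ (fun _ => 0)) by (intros k Hk; rewrite (Hall k i) by lia; ring).
    rewrite SR_const. ring. }
  rewrite HS, root_bound_no_excess by (pose proof (gavg_nonneg i); pose proof Nmax_pos; lra).
  apply Hmax. exists p. split.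
  - exists 0%nat. split; [lia|]. pose proof (dpow_pos n adj alpha 0). lra.
  - intros k Hk. rewrite gavg_mul, (Hall k i) by auto. reflexivity.
Qed.

(* For alpha = 0, N = 1 and (^alpha m)_k = d_k; the bound matches the
   eigenvalue of the dominating-prefix graph. *)
Lemma alpha_zero_attains (t : nat) (rho : R) : is_spectral_radius n adj rho ->
  (1 <= t)%nat -> (t <= i)%nat -> alpha = 0 ->
  (forall k, (k < t)%nat -> deg n adj k = (n - 1)%nat) ->
  (forall k, (t <= k)%nat -> (k < n)%nat ->
     deg n adj k = deg n adj t /\ (deg n adj t < n - 1)%nat) ->
  bound <= rho.
Proof.
  intros Hrho Ht1 Hti Ha0 Hfull Htail. set (d := deg n adj t).
  assert (Hmd : forall k, m k = INR (deg n adj k)).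
  { intros k. apply gavg_deg. intros j _. subst alpha. rewrite !dpow_zero. reflexivity. }
  assert (HN1 : N = 1).
  { pose proof (Nmax_ge 0 1 (deg_full_inv 0 ltac:(lia) (Hfull 0%nat ltac:(lia))
                               1 ltac:(lia) ltac:(lia))).
    assert (N <= 1) by (apply Nmax_le; [intros k j _; subst alpha; rewrite !dpow_zero |]; lra).
    subst alpha. rewrite !dpow_zero in H. lra. }
  assert (Hmi : m i = INR d) by (rewrite Hmd, (proj1 (Htail i ltac:(lia) Hi)); reflexivity).
  assert (HS : S_i = INR t * (INR n - 1 - INR d)).
  { rewrite <- (SR_indic i t) by auto. apply SR_ext. intros k Hk. rewrite Hmi, Hmd.
    destruct (Nat.ltb k t) eqn:Hkt.
    - apply Nat.ltb_lt in Hkt. rewrite Hfull, minus_INR by lia. simpl. ring.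
    - apply Nat.ltb_ge in Hkt. rewrite (proj1 (Htail k Hkt ltac:(lia))). fold d. ring. }
  unfold root_bound. rewrite HS, HN1, Hmi, Rmult_1_r.
  apply (prefix_lower_bound t d rho); auto; [lia|]. intros k Htk Hk. apply Htail; auto.
Qed.

Lemma dominating_vertex_powers (d : nat) :
  (forall k, (1 <= k)%nat -> (k < n)%nat -> deg n adj k = d) ->
  forall j, (j < n)%nat -> p j = if Nat.ltb j 1 then p 0%nat else p 1%nat.
Proof.
  intros Hdd j Hj. destruct (Nat.ltb j 1) eqn:E.
  - apply Nat.ltb_lt in E. replace j with 0%nat by lia. reflexivity.
  - apply Nat.ltb_ge in E. apply dpow_deg. rewrite !Hdd; auto; lia.
Qed.

Lemma dominating_vertex_values (d : nat) : alpha > 0 -> deg n adj 0 = (n - 1)%nat ->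
  (forall k, (1 <= k)%nat -> (k < n)%nat -> deg n adj k = d) -> (d < n - 1)%nat ->
  N = p 0%nat / p 1%nat /\ p 0%nat / p 1%nat * m 0%nat = INR n - 1 /\
  m 1%nat = p 0%nat / p 1%nat + INR d - 1.
Proof.
  intros Hapos Hd0 Hdd Hdn. pose proof (dominating_vertex_powers d Hdd) as Hpf.
  assert (Hfull : forall l, (l < 1)%nat -> deg n adj l = (n - 1)%nat)
    by (intros l Hl; replace l with 0%nat by lia; auto).
  pose proof (dpow_pos n adj alpha 0) as Hp0. pose proof (dpow_pos n adj alpha 1) as Hp1.
  set (c := p 0%nat / p 1%nat).
  assert (Hc1 : 1 < c).
  { assert (p 1%nat < p 0%nat).
    { apply dpow_lt; auto; [apply deg_pos; lia|]. rewrite Hd0, Hdd by lia. apply lt_INR; lia. }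
    unfold c. apply Rmult_lt_reg_r with (p 1%nat); auto. field_simplify; lra. }
  assert (Hrow : forall k, (k < n)%nat ->
            m k * p k = SR n (fun j => Aentry adj k j * (if Nat.ltb j 1 then p 0%nat else p 1%nat))).
  { intros k Hk. rewrite <- gavg_mul. apply SR_ext. intros j Hj. rewrite <- Hpf; auto. }
  split; [|split].
  - apply Rle_antisym.
    + apply Nmax_le; [|lra]. destruct Hg as [_ [_ Hb]]. intros k j Hkj.
      destruct (Hb k j Hkj) as [Hk Hj]. rewrite (Hpf j Hj), (Hpf k Hk).
      assert (E00 : p 0%nat / p 0%nat = 1) by (field; lra).
      assert (E11 : p 1%nat / p 1%nat = 1) by (field; lra).
      assert (E10 : p 1%nat / p 0%nat * c = 1) by (unfold c; field; lra).
      assert (0 < p 1%nat / p 0%nat) by (apply Rdiv_lt_0_compat; lra).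
      destruct (Nat.ltb j 1), (Nat.ltb k 1); fold c; nra.
    + apply Nmax_ge. destruct Hg as [Hsym _]. rewrite Hsym. apply (deg_full_inv 0); auto; lia.
  - pose proof (Hrow 0%nat ltac:(lia)) as H. rewrite prefix_row in H by (auto; lia).
    simpl in H. unfold c. apply Rmult_eq_reg_r with (p 1%nat); [|lra].
    field_simplify; [|lra]. lra.
  - pose proof (Hrow 1%nat ltac:(lia)) as H. rewrite prefix_row in H by (auto; lia).
    simpl in H. rewrite Hdd in H by lia. unfold c. apply Rmult_eq_reg_r with (p 1%nat); [|lra].
    field_simplify; [|lra]. lra.
Qed.

(* For alpha > 0 with one dominating vertex the bound simplifies to the same
   expression as the dominating-prefix eigenvalue with t = 1. *)
Lemma alpha_pos_attains (rho : R) : is_spectral_radius n adj rho ->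
  (1 <= i)%nat -> alpha > 0 -> deg n adj 0 = (n - 1)%nat ->
  (forall k, (1 <= k)%nat -> (k < n)%nat -> m k = m 1%nat) ->
  (forall k, (1 <= k)%nat -> (k < n)%nat ->
     deg n adj k = deg n adj 1 /\ (deg n adj 1 < n - 1)%nat) ->
  bound <= rho.
Proof.
  intros Hrho Hi1 Hapos Hd0 Hmk Htail. set (d := deg n adj 1).
  assert (Hdd : forall k, (1 <= k)%nat -> (k < n)%nat -> deg n adj k = d)
    by (intros; apply Htail; auto).
  destruct (dominating_vertex_values d Hapos Hd0 Hdd ltac:(apply (Htail 1%nat); lia))
    as [HNc [Hm0 Hm1]].
  assert (Hmi : m i = m 1%nat) by (apply Hmk; lia).
  assert (HS : S_i = m 0%nat - m 1%nat).
  { rewrite (SR_ext i _ (fun k => if Nat.ltb k 1 then m 0%nat - m 1%nat else 0)).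
    - rewrite SR_indic by lia. simpl. ring.
    - intros k Hk. rewrite Hmi. destruct (Nat.ltb k 1) eqn:E.
      + apply Nat.ltb_lt in E. replace k with 0%nat by lia. reflexivity.
      + apply Nat.ltb_ge in E. rewrite Hmk by lia. ring. }
  replace bound with ((INR d - 1 + sqrt ((INR d + 1) ^ 2 + 4 * (INR 1 * (INR n - 1 - INR d)))) / 2).
  - apply (prefix_lower_bound 1 d rho); [lia | lia | | exact Hdd | exact Hrho].
    intros l Hl. replace l with 0%nat by lia. exact Hd0.
  - unfold root_bound. rewrite HS, HNc, Hmi, Hm1. f_equal. f_equal; [ring|]. f_equal.
    simpl INR. nra.
Qed.

End Graph.

Theorem theorem3 (n : nat) (adj : nat -> nat -> bool) (alpha : R)
  (Hg : simple_graph n adj) (Hc : connected n adj) (Hn : (2 <= n)%nat)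
  (Hord : forall k l, (k <= l)%nat -> (l < n)%nat ->
            gavg n adj alpha l <= gavg n adj alpha k)
  (i : nat) (Hi : (i < n)%nat) (rho : R) (Hrho : is_spectral_radius n adj rho) :
  let m := gavg n adj alpha in
  let N := Nmax n adj alpha in
  let bound :=
    (m i - N + sqrt ((m i + N) ^ 2
        + 4 * N * sumR (map (fun k => m k - m i) (seq 0 i)))) / 2 in
  rho <= bound /\
  (rho = bound <->
     (forall k l, (k < n)%nat -> (l < n)%nat -> m k = m l) \/
     (exists t, (1 <= t)%nat /\ (t <= i)%nat /\
        ((alpha = 0 /\ bidegreed n adj /\
          (forall k, (k < t)%nat -> deg n adj k = (n - 1)%nat) /\
          (forall k, (t <= k)%nat -> (k < n)%nat ->
             deg n adj k = deg n adj t /\ (deg n adj t < n - 1)%nat)) \/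
         (alpha > 0 /\ bidegreed n adj /\
          m 0%nat > m 1%nat /\
          (forall k, (1 <= k)%nat -> (k < n)%nat -> m k = m 1%nat) /\
          deg n adj 0 = (n - 1)%nat /\
          (forall k, (1 <= k)%nat -> (k < n)%nat ->
             deg n adj k = deg n adj 1 /\ (deg n adj 1 < n - 1)%nat))))).
Proof.
  intros m N bound. change bound with (root_bound (m i) N (SR i (fun k => m k - m i))).
  assert (Hupper : rho <= root_bound (m i) N (SR i (fun k => m k - m i)))
    by (eapply spectral_upper; eauto).
  split; [exact Hupper | split].
  -
    intros Heq. destruct (classic (exists j, (j < i)%nat /\ m i < m j)) as [Hex|Hnone].
    + right. destruct (equality_prefix n adj alpha Hg Hc Hn i Hi Hord rho Hrho Heq Hex)
        as [t Ht].
      exists t. split; [apply Ht|]. split; [apply Ht|].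
      destruct (Req_dec alpha 0) as [Ha0|Ha0].
      * left. split; [exact Ha0|]. eapply prefix_alpha_zero; eauto.
      * right. eapply prefix_alpha_nonzero; eauto.
    + left. eapply equality_constant; eauto.
  -
    intros Hcase. apply Rle_antisym; [exact Hupper|].
    destruct Hcase as [Hall | [t [Ht1 [Hti [[Ha0 [_ [Hfull Htail]]]
                                           | [Hpos [_ [_ [Hmk [Hd0 Htail]]]]]]]]]].
    + eapply constant_attains; eauto.
    + eapply alpha_zero_attains; eauto.
    + eapply alpha_pos_attains; eauto. lia.
Qed.
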